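(* Let $n,m,p,N\in\mathbb{N}_+$, $B\in\mathbb{R}^{n\times m}$, $C\in\mathbb{R}^{p\times n}$ of full column rank, $x_0\in\mathbb{R}^n$, $r_1,\dots,r_N\in\mathbb{R}^p$, $r_0:=Cx_0$, and $\mathcal{S}_{\rm M1}\subseteq\mathbb{R}^{n\times n}\times\mathbb{R}^{m\times N}$. Let $v^*_{\rm A1}$ be the optimal value (infimum) of problem (AMOPUL1): minimize $\sum_{t=1}^N\|CAC^{\dagger}r_{t-1}+CBu_{t-1}-r_t\|_2$ over $(A,U)\in\mathcal{S}_{\rm M1}$, $U=(u_0,\dots,u_{N-1})$. Let $\epsilon_1,\dots,\epsilon_N\ge0$ and $$\mathcal{Z}_\epsilon:=\{(A,U)\in\mathcal{S}_{\rm M1}:\ \hat y_0=Cx_0,\ \hat y_t=CAC^{\dagger}\hat y_{t-1}+CBu_{t-1},\ \|\hat y_t-r_t\|_2\le\epsilon_t,\ t=1,\dots,N\}.$$ If $\mathcal{Z}_\epsilon\ne\emptyset$, then $$v^*_{\rm A1}\le(1+\gamma)\sum_{t=1}^{N-1}\epsilon_t+\epsilon_N,\qquad \gamma:=\inf_{(A,U)\in\mathcal{Z}_\epsilon}\|CAC^{\dagger}\|_2.$$ Moreover, if there exists $(A,U)\in\mathcal{S}_{\rm M1}$ such that the sequence defined by $\hat y_0=Cx_0$, $\hat y_t=CAC^{\dagger}\hat y_{t-1}+CBu_{t-1}$ satisfies $\hat y_t=r_t$ for $t=1,\dots,N$, then $v^*_{\rm A1}=0$.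
   Context: $C^{\dagger}$ is the Moore–Penrose inverse of $C$; $\|\cdot\|_2$ is the Euclidean norm for vectors and the spectral norm for matrices. In the paper $\mathcal{S}_{\rm M1}$ is assumed SD representable, though this is not used in the claim. *)

From HB Require Import structures.
From mathcomp Require Import all_boot all_order all_algebra.
From mathcomp Require Import all_classical all_reals.
Set Implicit Arguments. Unset Strict Implicit. Unset Printing Implicit Defensive.
Import Order.TTheory GRing.Theory Num.Theory.
Local Open Scope ring_scope.
Local Open Scope classical_set_scope.

Definition enorm (R : realType) (k : nat) (x : 'cV[R]_k) : R :=
  Num.sqrt (\sum_(i < k) (x i 0) ^+ 2).

Definition specnorm (R : realType) (a b : nat) (M : 'M[R]_(a, b)) : R :=
  sup ((fun x : 'cV[R]_b => enorm (M *m x)) @` [set x | enorm x <= 1]).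

Definition MP_inverse (R : realType) (p n : nat)
  (C : 'M[R]_(p, n)) (X : 'M[R]_(n, p)) : Prop :=
  [/\ C *m X *m C = C, X *m C *m X = X,
      (C *m X)^T = C *m X & (X *m C)^T = X *m C].

(* t-th column of U (0-based), zero if t is out of range *)
Definition ucol (R : realType) (m N : nat) (U : 'M[R]_(m, N)) (t : nat) : 'cV[R]_m :=
  \col_i (if insub t is Some j then U i j else 0).

Fixpoint yhat (R : realType) (n m p N : nat) (B : 'M[R]_(n, m)) (C : 'M[R]_(p, n))
  (Cd : 'M[R]_(n, p)) (x0 : 'cV[R]_n) (A : 'M[R]_n) (U : 'M[R]_(m, N)) (t : nat)
  : 'cV[R]_p :=
  match t with
  | 0 => C *m x0
  | t'.+1 => C *m A *m Cd *m yhat B C Cd x0 A U t' + C *m B *m ucol U t'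
  end.

Definition J_A1 (R : realType) (n m p N : nat) (B : 'M[R]_(n, m)) (C : 'M[R]_(p, n))
  (Cd : 'M[R]_(n, p)) (r : nat -> 'cV[R]_p) (A : 'M[R]_n) (U : 'M[R]_(m, N)) : R :=
  \sum_(t < N) enorm (C *m A *m Cd *m r t + C *m B *m ucol U t - r t.+1).

Definition v_A1 (R : realType) (n m p N : nat) (B : 'M[R]_(n, m)) (C : 'M[R]_(p, n))
  (Cd : 'M[R]_(n, p)) (r : nat -> 'cV[R]_p) (S : set ('M[R]_n * 'M[R]_(m, N))) : R :=
  inf ((fun z => J_A1 B C Cd r z.1 z.2) @` S).

Definition Z_eps (R : realType) (n m p N : nat) (B : 'M[R]_(n, m)) (C : 'M[R]_(p, n))
  (Cd : 'M[R]_(n, p)) (x0 : 'cV[R]_n) (r : nat -> 'cV[R]_p)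
  (S : set ('M[R]_n * 'M[R]_(m, N))) (eps : nat -> R) : set ('M[R]_n * 'M[R]_(m, N)) :=
  [set z | S z /\ forall t : nat, (1 <= t <= N)%N ->
     enorm (yhat B C Cd x0 z.1 z.2 t - r t) <= eps t].

From HB Require Import structures.
From mathcomp Require Import all_boot all_order all_algebra.
From mathcomp Require Import all_classical all_reals.
From mathcomp Require Import ring lra.
Set Implicit Arguments. Unset Strict Implicit. Unset Printing Implicit Defensive.
Import Order.TTheory GRing.Theory Num.Theory.
Local Open Scope ring_scope.
Local Open Scope classical_set_scope.

(* Write e_t := r_t - yhat_t for the output error of a pair (A, U), so that
   e_0 = 0, and M := C A C^+.  The recursion for yhat turns the t-th residual
   of (AMOPUL1) into M e_{t-1} - e_t, whence by the triangle inequality and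
   |M x| <= |M| |x| the objective of (A, U) is at most
   (1 + |M|) (|e_1| + ... + |e_{N-1}|) + |e_N|.  On Z_eps this is bounded by
   (1 + |M|) (eps_1 + ... + eps_{N-1}) + eps_N, and since the bound is affine
   in |M| with a nonnegative slope it passes to the infimum over Z_eps.  Exact
   tracking is the case eps = 0. *)

Section EuclideanNorm.
Variable R : realType.

Lemma CauchySchwarz_sum k (a b : 'I_k -> R) :
  (\sum_i a i * b i) ^+ 2 <= (\sum_i a i ^+ 2) * (\sum_i b i ^+ 2).
Proof.
have sum_prod (f g : 'I_k -> R) :
    \sum_i \sum_j f i * g j = (\sum_i f i) * (\sum_j g j).
  by rewrite mulr_suml; apply: eq_bigr => i _; rewrite mulr_sumr.
have lagrange : \sum_i \sum_j (a i * b j - a j * b i) ^+ 2 =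
    \sum_i \sum_j a i ^+ 2 * b j ^+ 2 + \sum_i \sum_j b i ^+ 2 * a j ^+ 2
    - 2 * \sum_i \sum_j (a i * b i) * (a j * b j).
  rewrite -!big_split mulr_sumr -sumrB /=; apply: eq_bigr => i _.
  rewrite mulr_sumr -!big_split -sumrB; apply: eq_bigr => j _ /=; ring.
have : 0 <= \sum_i \sum_j (a i * b j - a j * b i) ^+ 2.
  by apply: sumr_ge0 => i _; apply: sumr_ge0 => j _; exact: sqr_ge0.
rewrite lagrange !sum_prod [(\sum_i b i ^+ 2) * _]mulrC -expr2; lra.
Qed.

Lemma sumsqr_ge0 k (x : 'cV[R]_k) : 0 <= \sum_i x i 0 ^+ 2.
Proof. by apply: sumr_ge0 => i _; exact: sqr_ge0. Qed.

Lemma enorm_ge0 k (x : 'cV[R]_k) : 0 <= enorm x.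
Proof. exact: sqrtr_ge0. Qed.

Lemma enorm_sqr k (x : 'cV[R]_k) : enorm x ^+ 2 = \sum_i x i 0 ^+ 2.
Proof. by rewrite sqr_sqrtr ?sumsqr_ge0. Qed.

Lemma enorm0 k : enorm (0 : 'cV[R]_k) = 0.
Proof. by rewrite /enorm big1 ?sqrtr0 // => i _; rewrite mxE expr0n. Qed.

Lemma enormN k (x : 'cV[R]_k) : enorm (- x) = enorm x.
Proof. by rewrite /enorm; congr Num.sqrt; apply: eq_bigr => i _; rewrite mxE sqrrN. Qed.

Lemma enormZ k (a : R) (x : 'cV[R]_k) : enorm (a *: x) = `|a| * enorm x.
Proof.
rewrite /enorm -sqrtr_sqr -sqrtrM ?sqr_ge0 // mulr_sumr.
by congr Num.sqrt; apply: eq_bigr => i _; rewrite mxE exprMn.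
Qed.

Lemma enormD k (x y : 'cV[R]_k) : enorm (x + y) <= enorm x + enorm y.
Proof.
set s := \sum_i x i 0 * y i 0.
have s_le : s <= enorm x * enorm y.
  rewrite /enorm -sqrtrM ?sumsqr_ge0 //; apply: le_trans (ler_norm s) _.
  by rewrite -sqrtr_sqr ler_wsqrtr // CauchySchwarz_sum.
have expand : enorm (x + y) ^+ 2 = enorm x ^+ 2 + 2 * s + enorm y ^+ 2.
  rewrite !enorm_sqr /s mulr_sumr -!big_split; apply: eq_bigr => i _ /=.
  by rewrite mxE; ring.
rewrite -(ler_pXn2r (_ : 0 < 2)%N) ?nnegrE ?addr_ge0 ?enorm_ge0 // expand.
by rewrite sqrrD; lra.
Qed.

Lemma enormB k (x y : 'cV[R]_k) : enorm (x - y) <= enorm x + enorm y.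
Proof. by rewrite -(enormN y) enormD. Qed.

Definition frobenius_norm a b (M : 'M[R]_(a, b)) : R :=
  Num.sqrt (\sum_i \sum_j M i j ^+ 2).

Lemma enorm_mulmx_le_frobenius a b (M : 'M[R]_(a, b)) (x : 'cV[R]_b) :
  enorm (M *m x) <= frobenius_norm M * enorm x.
Proof.
have sumsqrM_ge0 : 0 <= \sum_i \sum_j M i j ^+ 2.
  by apply: sumr_ge0 => i _; apply: sumr_ge0 => j _; exact: sqr_ge0.
rewrite /frobenius_norm /enorm -sqrtrM // ler_sqrt ?mulr_ge0 ?sumsqr_ge0 //.
rewrite mulr_suml; apply: ler_sum => i _; rewrite mxE.
exact: CauchySchwarz_sum.
Qed.

Lemma has_sup_specnorm a b (M : 'M[R]_(a, b)) :
  has_sup ((fun x : 'cV[R]_b => enorm (M *m x)) @` [set x | enorm x <= 1]).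
Proof.
split; first by exists (enorm (M *m 0)); exists 0; rewrite //= enorm0.
exists (frobenius_norm M) => _ [x /= x_le1 <-].
apply: le_trans (enorm_mulmx_le_frobenius M x) _.
by rewrite ler_piMr ?sqrtr_ge0.
Qed.

Lemma specnorm_ge0 a b (M : 'M[R]_(a, b)) : 0 <= specnorm M.
Proof.
apply: le_trans (sup_upper_bound (has_sup_specnorm M) _).
  exact: (enorm_ge0 (M *m 0)).
by exists 0; rewrite //= enorm0.
Qed.

Lemma enorm_mulmx_le a b (M : 'M[R]_(a, b)) (x : 'cV[R]_b) :
  enorm (M *m x) <= specnorm M * enorm x.
Proof.
have [x0 | xN0] := eqVneq (enorm x) 0.
  by have := enorm_mulmx_le_frobenius M x; rewrite x0 !mulr0.
have x_gt0 : 0 < enorm x by rewrite lt_def xN0 enorm_ge0.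
have unit_x : enorm ((enorm x)^-1 *: x) <= 1.
  by rewrite enormZ ger0_norm ?invr_ge0 ?enorm_ge0 // mulVf.
have : enorm (M *m ((enorm x)^-1 *: x)) <= specnorm M.
  by apply: (sup_upper_bound (has_sup_specnorm M)); exists ((enorm x)^-1 *: x).
by rewrite /= -scalemxAr enormZ ger0_norm ?invr_ge0 ?enorm_ge0 // mulrC ler_pdivrMr.
Qed.

End EuclideanNorm.

Section RealBounds.
Variable R : realType.

Lemma sum_lagged_le (c : R) (a eps : nat -> R) (N : nat) :
  (0 < N)%N -> 0 <= c -> a 0%N = 0 ->
  (forall t, (1 <= t <= N)%N -> a t <= eps t) ->
  \sum_(t < N) (c * a t + a t.+1) <= (1 + c) * \sum_(1 <= t < N) eps t + eps N.
Proof.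
case: N => // N _ c_ge0 a0 a_le.
have inner_le : \sum_(1 <= t < N.+1) a t <= \sum_(1 <= t < N.+1) eps t.
  by apply: ler_sum_nat => t /andP[t_ge1 t_lt]; rewrite a_le // t_ge1 ltnW.
have last_le : a N.+1 <= eps N.+1 by apply: a_le; rewrite leqnn.
rewrite big_split /= -mulr_sumr -(big_mkord xpredT a) -(big_mkord xpredT (a \o S)).
have -> : \sum_(0 <= t < N.+1) (a \o S) t = \sum_(1 <= t < N.+2) a t.
  by rewrite big_add1.
rewrite big_ltn // a0 add0r [\sum_(1 <= t < N.+2) _]big_nat_recr //=.
have := ler_wpM2l c_ge0 inner_le; lra.
Qed.

Lemma le_inf_affine (T : Type) (Z : set T) (f : T -> R) (a b v : R) :
  Z !=set0 -> 0 <= a -> (forall z, Z z -> v <= a * f z + b) ->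
  v <= a * inf (f @` Z) + b.
Proof.
move=> [z0 Zz0] a_ge0 v_le.
have [a0 | aN0] := eqVneq a 0; first by have := v_le z0 Zz0; rewrite a0 !mul0r.
have a_gt0 : 0 < a by rewrite lt_def aN0.
rewrite -lerBlDr mulrC -ler_pdivrMr //.
apply: lb_le_inf; first by exists (f z0), z0.
move=> _ [z Zz <-]; rewrite ler_pdivrMr // lerBlDr mulrC; exact: v_le.
Qed.

End RealBounds.

Section OutputError.
Variables (R : realType) (n m p N : nat).
Variables (B : 'M[R]_(n, m)) (C : 'M[R]_(p, n)) (Cd : 'M[R]_(n, p)).
Variables (x0 : 'cV[R]_n) (r : nat -> 'cV[R]_p).
Hypothesis r0 : r 0%N = C *m x0.

Lemma J_A1_ge0 (A : 'M[R]_n) (U : 'M[R]_(m, N)) : 0 <= J_A1 B C Cd r A U.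
Proof. by apply: sumr_ge0 => t _; exact: enorm_ge0. Qed.

Lemma v_A1_le_J_A1 (S : set ('M[R]_n * 'M[R]_(m, N))) z :
  S z -> v_A1 B C Cd r S <= J_A1 B C Cd r z.1 z.2.
Proof.
move=> Sz; apply: ge_inf; last by exists z.
by exists 0 => _ [w _ <-]; exact: J_A1_ge0.
Qed.

Lemma v_A1_ge0 (S : set ('M[R]_n * 'M[R]_(m, N))) :
  S !=set0 -> 0 <= v_A1 B C Cd r S.
Proof.
move=> [z Sz]; apply: lb_le_inf; first by exists (J_A1 B C Cd r z.1 z.2), z.
by move=> _ [w _ <-]; exact: J_A1_ge0.
Qed.

Variables (A : 'M[R]_n) (U : 'M[R]_(m, N)).

Definition output_error t := r t - yhat B C Cd x0 A U t.

Lemma output_error0 : output_error 0 = 0.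
Proof. by rewrite /output_error /= r0 subrr. Qed.

Lemma J_A1_residualE t :
  C *m A *m Cd *m r t + C *m B *m ucol U t - r t.+1 =
  C *m A *m Cd *m output_error t - output_error t.+1.
Proof. by rewrite /output_error /= mulmxBr opprB !addrA subrK. Qed.

Lemma J_A1_le_output_error :
  J_A1 B C Cd r A U <=
  \sum_(t < N) (specnorm (C *m A *m Cd) * enorm (output_error t)
                + enorm (output_error t.+1)).
Proof.
apply: ler_sum => t _; rewrite J_A1_residualE.
by apply: le_trans (enormB _ _) _; rewrite lerD2r enorm_mulmx_le.
Qed.

Lemma J_A1_le_tolerance (eps : nat -> R) : (0 < N)%N ->
  (forall t, (1 <= t <= N)%N -> enorm (yhat B C Cd x0 A U t - r t) <= eps t) ->
  J_A1 B C Cd r A U <=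
  (1 + specnorm (C *m A *m Cd)) * \sum_(1 <= t < N) eps t + eps N.
Proof.
move=> N_gt0 tracking; apply: le_trans J_A1_le_output_error _.
apply: (sum_lagged_le (a := fun t => enorm (output_error t))) => //.
- exact: specnorm_ge0.
- by rewrite /= output_error0 enorm0.
by move=> t t_in; rewrite /output_error -enormN opprB tracking.
Qed.

End OutputError.

Theorem theorem4 (R : realType) (n m p N : nat)
  (hn : (0 < n)%N) (hm : (0 < m)%N) (hp : (0 < p)%N) (hN : (0 < N)%N)
  (B : 'M[R]_(n, m)) (C : 'M[R]_(p, n)) (hC : \rank C = n)
  (Cd : 'M[R]_(n, p)) (hCd : MP_inverse C Cd)
  (x0 : 'cV[R]_n) (r : nat -> 'cV[R]_p) (hr0 : r 0%N = C *m x0)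
  (S : set ('M[R]_n * 'M[R]_(m, N))) :
  (forall eps : nat -> R,
     (forall t : nat, (1 <= t <= N)%N -> 0 <= eps t) ->
     Z_eps B C Cd x0 r S eps !=set0 ->
     v_A1 B C Cd r S <=
       (1 + inf ((fun z => specnorm (C *m z.1 *m Cd)) @` Z_eps B C Cd x0 r S eps))
         * (\sum_(1 <= t < N) eps t) + eps N)
  /\
  ((exists2 z, S z & forall t : nat, (1 <= t <= N)%N ->
       yhat B C Cd x0 z.1 z.2 t = r t) ->
     v_A1 B C Cd r S = 0).
Proof.
split.
  move=> eps eps_ge0 Z_neq0.
  set E := \sum_(1 <= t < N) eps t.
  have E_ge0 : 0 <= E.
    rewrite /E big_nat_cond; apply: sumr_ge0 => t /andP[/andP[t_ge1 t_lt] _].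
    by rewrite eps_ge0 // t_ge1 ltnW.
  set gamma := inf _.
  rewrite (_ : (1 + gamma) * E + eps N = E * gamma + (E + eps N)); last by ring.
  apply: (le_inf_affine (f := fun z => specnorm (C *m z.1 *m Cd))) => // z [Sz tracking].
  apply: le_trans (v_A1_le_J_A1 B C Cd r Sz) _.
  rewrite (_ : E * _ + _ = (1 + specnorm (C *m z.1 *m Cd)) * E + eps N); last by ring.
  exact: (J_A1_le_tolerance hr0 hN tracking).
move=> [z Sz exact_tracking].
apply/le_anti; rewrite v_A1_ge0 ?andbT; last by exists z.
apply: le_trans (v_A1_le_J_A1 B C Cd r Sz) _.
have := J_A1_le_tolerance hr0 (B := B) (Cd := Cd) (A := z.1) (U := z.2) (eps := fun _ => 0) hN.
rewrite big1_eq mulr0 addr0; apply=> t t_in.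
by rewrite exact_tracking // subrr enorm0.
Qed.
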